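(* Let $\bm{L}\in\mathbb{R}^{m\times n}$ have rank $r$ and compact SVD $\bm{L}=\bm{W}_{\bm{L}}\bm{\Sigma}_{\bm{L}}\bm{V}_{\bm{L}}^T$, and suppose $\max_{i}\|\bm{W}_{\bm{L}}^T\bm{e}_i\|_2\leq\sqrt{\mu_1(\bm{L}) r/m}$ and $\max_{i}\|\bm{V}_{\bm{L}}^T\bm{e}_i\|_2\leq\sqrt{\mu_2(\bm{L}) r/n}$. Let $J\subseteq[n]$ and $\bm{C}=\bm{L}(:,J)$. Then \begin{enumerate} \item $\|\bm{C}\|_2\leq\sqrt{\frac{\mu_2(\bm{L})r|J|}{n}}\,\|\bm{L}\|_2$; \item $\kappa(\bm{C})\leq\sqrt{\mu_2(\bm{L}) r}\,\kappa(\bm{L})\sqrt{\frac{|J|}{n}}\,\|\bm{V}_{\bm{L}}(J,:)^\dagger\|_2$. \end{enumerate}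
   Context: $[n]=\{1,\dots,n\}$; $\bm{A}(I,J)$ denotes a submatrix ('':'' meaning all indices); $\bm{A}^\dagger$ is the Moore–Penrose pseudoinverse; $\kappa(\bm{A})=\|\bm{A}\|_2\|\bm{A}^\dagger\|_2=\sigma_{\max}(\bm{A})/\sigma_{\min}(\bm{A})$ with $\sigma_{\min}$ the smallest nonzero singular value. *)

From HB Require Import structures.
From mathcomp Require Import all_boot all_order all_algebra.
From mathcomp Require Import boolp classical_sets reals.
Set Implicit Arguments. Unset Strict Implicit. Unset Printing Implicit Defensive.
Import Order.TTheory GRing.Theory Num.Theory.
Local Open Scope ring_scope.
Local Open Scope classical_set_scope.

Section Defs.
Variable R : realType.

Definition vnorm2 n (x : 'cV[R]_n) : R := Num.sqrt (\sum_(i < n) x i 0 ^+ 2).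

Definition opnorm2 m n (A : 'M[R]_(m, n)) : R :=
  sup [set y : R | exists x : 'cV[R]_n, vnorm2 x <= 1 /\ y = vnorm2 (A *m x)].

Definition penrose m n (A : 'M[R]_(m, n)) (X : 'M[R]_(n, m)) : Prop :=
  [/\ A *m X *m A = A, X *m A *m X = X,
      (A *m X)^T = A *m X & (X *m A)^T = X *m A].

Definition pinv m n (A : 'M[R]_(m, n)) : 'M[R]_(n, m) := xget 0 [set X | penrose A X].

(* condition number kappa(A) = ||A||_2 ||A^+||_2 = sigma_max / sigma_min(nonzero) *)
Definition kappa m n (A : 'M[R]_(m, n)) : R := opnorm2 A * opnorm2 (pinv A).

Definition compact_svd m n r (L : 'M[R]_(m, n)) (W : 'M[R]_(m, r))
    (s : 'rV[R]_r) (V : 'M[R]_(n, r)) : Prop :=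
  [/\ L = W *m diag_mx s *m V^T, W^T *m W = 1%:M, V^T *m V = 1%:M
    & forall k, 0 < s 0 k].

Definition colsJ m n (L : 'M[R]_(m, n)) (J : {set 'I_n}) : 'M[R]_(m, #|J|) :=
  colsub (fun k : 'I_#|J| => enum_val k) L.

Definition rowsJ n r (V : 'M[R]_(n, r)) (J : {set 'I_n}) : 'M[R]_(#|J|, r) :=
  rowsub (fun k : 'I_#|J| => enum_val k) V.

End Defs.

From HB Require Import structures.
From mathcomp Require Import all_boot all_order all_algebra.
From mathcomp Require Import boolp classical_sets reals.
From mathcomp Require Import ring lra.
Set Implicit Arguments. Unset Strict Implicit. Unset Printing Implicit Defensive.
Import Order.TTheory GRing.Theory Num.Theory.
Local Open Scope ring_scope.

(* Write B = V(J,:), so that C = W Σ B^T = L V B^T.  Since V is an isometry,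
   ||C|| <= ||L|| ||B^T||, and ||B^T|| is at most the Frobenius norm of B,
   whose rows have squared norm at most μ2 r / n.
   For the pseudoinverse X of C, a vector u = X z lies in the range of
   C^T ⊆ range B, on which (B^+)^T B^T is the identity; hence
   ||u|| <= ||B^+|| ||B^T u||.  Every singular value satisfies
   σ_k ||L^+|| >= 1, so ||B^T u|| <= ||L^+|| ||Σ B^T u|| = ||L^+|| ||C X z||,
   and C X is an orthogonal projection. *)

Section EuclideanNorm.
Variable R : realType.

Lemma sqr_sum_mul_le n (a b : 'I_n -> R) :
  (\sum_i a i * b i) ^+ 2 <= (\sum_i a i ^+ 2) * (\sum_i b i ^+ 2).
Proof.
set A := \sum_i a i ^+ 2; set B := \sum_i b i ^+ 2; set D := \sum_i a i * b i.
have A_ge0 : 0 <= A by apply: sumr_ge0 => i _; exact: sqr_ge0.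
have lagrange : \sum_i (A * b i - D * a i) ^+ 2 = A * (A * B - D ^+ 2).
  transitivity (\sum_i (A ^+ 2 * b i ^+ 2 - (2 * A * D) * (a i * b i)
                         + D ^+ 2 * a i ^+ 2)).
    by apply: eq_bigr => i _; ring.
  rewrite big_split /= sumrB -!mulr_sumr -/A -/B -/D; ring.
have : 0 <= A * (A * B - D ^+ 2).
  by rewrite -lagrange; apply: sumr_ge0 => i _; exact: sqr_ge0.
have [Agt0|Ale0 _] := ltP 0 A; first by rewrite pmulr_rge0 // subr_ge0.
have A0 : A = 0 by apply/le_anti; rewrite Ale0 A_ge0.
have a0 i : a i = 0.
  apply/eqP; rewrite -sqrf_eq0; apply/eqP.
  by apply: (psumr_eq0P _ A0) => // j _; exact: sqr_ge0.
have D0 : D = 0 by rewrite /D big1 // => i _; rewrite a0 mul0r.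
by rewrite D0 A0 expr0n mul0r.
Qed.

Lemma ler_of_sqr_le_mul (a b : R) : 0 <= a -> 0 <= b -> a ^+ 2 <= b * a -> a <= b.
Proof. by move=> *; nra. Qed.

Lemma vnorm2_ge0 n (x : 'cV[R]_n) : 0 <= vnorm2 x.
Proof. exact: sqrtr_ge0. Qed.

Lemma vnorm2_sqr n (x : 'cV[R]_n) : vnorm2 x ^+ 2 = (x^T *m x) 0 0.
Proof.
rewrite sqr_sqrtr; last by apply: sumr_ge0 => i _; exact: sqr_ge0.
by rewrite mxE; apply: eq_bigr => i _; rewrite mxE expr2.
Qed.

Lemma vnorm2E n (x : 'cV[R]_n) : vnorm2 x = Num.sqrt ((x^T *m x) 0 0).
Proof. by rewrite -vnorm2_sqr sqrtr_sqr ger0_norm ?vnorm2_ge0. Qed.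

Lemma vnorm2_eq0 n (x : 'cV[R]_n) : vnorm2 x = 0 -> x = 0.
Proof.
move=> x0; have sum0 : \sum_i x i 0 ^+ 2 = 0.
  rewrite -[LHS]sqr_sqrtr -/(vnorm2 x) ?x0 ?expr0n //.
  by apply: sumr_ge0 => i _; exact: sqr_ge0.
apply/matrixP => i j; rewrite ord1 mxE; apply/eqP; rewrite -sqrf_eq0; apply/eqP.
by apply: (psumr_eq0P _ sum0) => // k _; exact: sqr_ge0.
Qed.

Lemma vnorm20 n : vnorm2 (0 : 'cV[R]_n) = 0.
Proof. by rewrite vnorm2E trmx0 mul0mx mxE sqrtr0. Qed.

Lemma vnorm2Z n (c : R) (x : 'cV[R]_n) : vnorm2 (c *: x) = `|c| * vnorm2 x.
Proof.
rewrite /vnorm2 -sqrtr_sqr -sqrtrM ?sqr_ge0 // mulr_sumr.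
by congr Num.sqrt; apply: eq_bigr => i _; rewrite mxE exprMn.
Qed.

Lemma vnorm2_cauchy_schwarz n (x y : 'cV[R]_n) : (x^T *m y) 0 0 <= vnorm2 x * vnorm2 y.
Proof.
apply: le_trans (ler_norm _) _.
rewrite -sqrtr_sqr /vnorm2 -sqrtrM; last by apply: sumr_ge0 => i _; exact: sqr_ge0.
apply: ler_wsqrtr; rewrite mxE; under eq_bigr do rewrite mxE.
exact: (sqr_sum_mul_le (fun i => x i 0) (fun i => y i 0)).
Qed.

Lemma vnorm2_isometry m n (V : 'M[R]_(m, n)) y :
  V^T *m V = 1%:M -> vnorm2 (V *m y) = vnorm2 y.
Proof. by move=> VtV; rewrite !vnorm2E trmx_mul -mulmxA (mulmxA V^T) VtV mul1mx. Qed.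

Lemma ler_vnorm2 n (x y : 'cV[R]_n) :
  (forall k, `|x k 0| <= `|y k 0|) -> vnorm2 x <= vnorm2 y.
Proof.
move=> xy; apply: ler_wsqrtr; apply: ler_sum => i _.
rewrite -(real_normK (num_real (x i 0))) -(real_normK (num_real (y i 0))).
by rewrite lerXn2r ?nnegrE.
Qed.

Lemma vnorm2_proj_le n (P : 'M[R]_n) z :
  P^T = P -> P *m P = P -> vnorm2 (P *m z) <= vnorm2 z.
Proof.
move=> Psym Pidem; apply: ler_of_sqr_le_mul; rewrite ?vnorm2_ge0 //.
rewrite vnorm2_sqr trmx_mul Psym mulmxA -(mulmxA z^T) Pidem -mulmxA.
exact: vnorm2_cauchy_schwarz.
Qed.

End EuclideanNorm.

Section OperatorNorm.
Variable R : realType.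

Definition frob m n (A : 'M[R]_(m, n)) : R := Num.sqrt (\sum_i \sum_j A i j ^+ 2).

Lemma frob_ge0 m n (A : 'M[R]_(m, n)) : 0 <= frob A.
Proof. exact: sqrtr_ge0. Qed.

Lemma frob_tr m n (A : 'M[R]_(m, n)) : frob A^T = frob A.
Proof.
rewrite /frob exchange_big /=; congr Num.sqrt.
by apply: eq_bigr => i _; apply: eq_bigr => j _; rewrite mxE.
Qed.

Lemma vnorm2_mul_le_frob m n (A : 'M[R]_(m, n)) x :
  vnorm2 (A *m x) <= frob A * vnorm2 x.
Proof.
rewrite /frob /vnorm2 -sqrtrM; last first.
  by apply: sumr_ge0 => i _; apply: sumr_ge0 => j _; exact: sqr_ge0.
apply: ler_wsqrtr; rewrite mulr_suml; apply: ler_sum => i _.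
rewrite mxE; exact: (sqr_sum_mul_le (fun j => A i j) (fun j => x j 0)).
Qed.

Lemma frob_le_rows m n (A : 'M[R]_(m, n)) c : 0 <= c ->
  (forall i, vnorm2 (row i A)^T <= c) -> frob A <= c * Num.sqrt m%:R.
Proof.
move=> c_ge0 rowA; rewrite /frob -[c * _]ger0_norm ?mulr_ge0 ?sqrtr_ge0 //.
rewrite -sqrtr_sqr; apply: ler_wsqrtr.
rewrite exprMn sqr_sqrtr ?ler0n // mulr_natr -[X in _ *+ X]card_ord -sumr_const.
apply: ler_sum => i _.
have := lerXn2r 2 (vnorm2_ge0 _) c_ge0 (rowA i); rewrite sqr_sqrtr; last first.
  by apply: sumr_ge0 => j _; exact: sqr_ge0.
by under eq_bigr do rewrite !mxE.
Qed.

Lemma opnorm2_has_sup m n (A : 'M[R]_(m, n)) :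
  has_sup [set y : R | exists x : 'cV[R]_n, vnorm2 x <= 1 /\ y = vnorm2 (A *m x)].
Proof.
split; first by exists 0, 0; rewrite vnorm20 ler01 mulmx0 vnorm20.
exists (frob A) => _ [x [x_le1 ->]].
apply: le_trans (vnorm2_mul_le_frob A x) _.
by rewrite -[leRHS]mulr1 ler_wpM2l ?frob_ge0.
Qed.

Lemma opnorm2_ge0 m n (A : 'M[R]_(m, n)) : 0 <= opnorm2 A.
Proof.
apply: sup_upper_bound (opnorm2_has_sup A) _ _.
by exists 0; rewrite vnorm20 ler01 mulmx0 vnorm20.
Qed.

Lemma vnorm2_mul_le_opnorm2 m n (A : 'M[R]_(m, n)) x :
  vnorm2 (A *m x) <= opnorm2 A * vnorm2 x.
Proof.
have [x0|x_neq0] := eqVneq (vnorm2 x) 0.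
  by rewrite x0 (vnorm2_eq0 x0) mulmx0 vnorm20 mulr0.
have x_gt0 : 0 < vnorm2 x by rewrite lt_def x_neq0 vnorm2_ge0.
set u := (vnorm2 x)^-1 *: x.
have u_unit : vnorm2 u = 1 by rewrite vnorm2Z ger0_norm ?invr_ge0 ?vnorm2_ge0 // mulVf.
have : vnorm2 (A *m u) <= opnorm2 A.
  by apply: sup_upper_bound (opnorm2_has_sup A) _ _; exists u; rewrite u_unit.
rewrite -scalemxAr vnorm2Z ger0_norm ?invr_ge0 ?vnorm2_ge0 //.
by rewrite ler_pdivrMl // mulrC.
Qed.

Lemma opnorm2_le_bound m n (A : 'M[R]_(m, n)) K : 0 <= K ->
  (forall x, vnorm2 (A *m x) <= K * vnorm2 x) -> opnorm2 A <= K.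
Proof.
move=> K_ge0 AK; apply: ge_sup.
  by exists 0, 0; rewrite vnorm20 ler01 mulmx0 vnorm20.
move=> _ [x [x_le1 ->]]; apply: le_trans (AK x) _.
by rewrite -[leRHS]mulr1 ler_wpM2l.
Qed.

Lemma opnorm2_le_frob m n (A : 'M[R]_(m, n)) : opnorm2 A <= frob A.
Proof. exact: opnorm2_le_bound (frob_ge0 A) (vnorm2_mul_le_frob A). Qed.

Lemma opnorm2_mulmx_le m n p (A : 'M[R]_(m, n)) (B : 'M[R]_(n, p)) :
  opnorm2 (A *m B) <= opnorm2 A * opnorm2 B.
Proof.
apply: opnorm2_le_bound => [|x]; first by rewrite mulr_ge0 ?opnorm2_ge0.
rewrite -mulmxA -mulrA; apply: le_trans (vnorm2_mul_le_opnorm2 _ _) _.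
by rewrite ler_wpM2l ?opnorm2_ge0 ?vnorm2_mul_le_opnorm2.
Qed.

Lemma opnorm2_isometry_mul m n p (V : 'M[R]_(m, n)) (A : 'M[R]_(n, p)) :
  V^T *m V = 1%:M -> opnorm2 (V *m A) = opnorm2 A.
Proof.
move=> VtV; rewrite /opnorm2; congr sup; apply/funext => y; apply/propext.
by split=> -[x [x_le1 ->]]; exists x; rewrite -mulmxA (vnorm2_isometry _ VtV).
Qed.

Lemma opnorm2_tr_le m n (A : 'M[R]_(m, n)) : opnorm2 A^T <= opnorm2 A.
Proof.
apply: opnorm2_le_bound => [|x]; first exact: opnorm2_ge0.
apply: ler_of_sqr_le_mul; rewrite ?mulr_ge0 ?vnorm2_ge0 ?opnorm2_ge0 //.
rewrite vnorm2_sqr trmx_mul trmxK -mulmxA.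
apply: le_trans (vnorm2_cauchy_schwarz _ _) _.
by rewrite (mulrC (opnorm2 A)) -mulrA ler_wpM2l ?vnorm2_ge0 ?vnorm2_mul_le_opnorm2.
Qed.

End OperatorNorm.

Section Pseudoinverse.
Variable R : realType.

Lemma unitmx_mul_tr k n (G : 'M[R]_(k, n)) : row_free G -> G *m G^T \in unitmx.
Proof.
move=> G_free; rewrite -row_free_unit; apply: inj_row_free => v vGGt.
have : vnorm2 (G^T *m v^T) = 0.
  by rewrite vnorm2E trmx_mul !trmxK mulmxA -(mulmxA v) vGGt mul0mx mxE sqrtr0.
move/vnorm2_eq0/(congr1 trmx); rewrite trmx_mul !trmxK trmx0 => /eqP.
by rewrite mulmx_free_eq0 // => /eqP.
Qed.

Lemma penrose_full_rank_factor m k n (F : 'M[R]_(m, k)) (G : 'M[R]_(k, n)) :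
  F^T *m F \in unitmx -> G *m G^T \in unitmx -> exists X, penrose (F *m G) X.
Proof.
set M := F^T *m F; set N := G *m G^T => M_unit N_unit.
exists (G^T *m invmx N *m invmx M *m F^T).
have FGX : F *m G *m (G^T *m invmx N *m invmx M *m F^T) = F *m invmx M *m F^T.
  by rewrite !mulmxA -(mulmxA F G) -/N -(mulmxA F N) mulmxV // mulmx1.
have XFG : G^T *m invmx N *m invmx M *m F^T *m (F *m G) = G^T *m invmx N *m G.
  by rewrite !mulmxA -(mulmxA _ F^T F) -/M -(mulmxA _ (invmx M) M) mulVmx // mulmx1.
have M_sym : M^T = M by rewrite /M trmx_mul trmxK.
have N_sym : N^T = N by rewrite /N trmx_mul trmxK.
split.
- by rewrite FGX !mulmxA -(mulmxA _ F^T F) -/M -(mulmxA _ _ M) mulVmx // mulmx1.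
- by rewrite XFG !mulmxA -(mulmxA _ G G^T) -/N -(mulmxA _ _ N) mulVmx // mulmx1.
- by rewrite FGX !trmx_mul trmxK trmx_inv M_sym mulmxA.
- by rewrite XFG !trmx_mul trmxK trmx_inv N_sym mulmxA.
Qed.

Lemma pinvP m n (A : 'M[R]_(m, n)) : penrose A (pinv A).
Proof.
apply: xgetPex; rewrite -(mulmx_base A).
apply: penrose_full_rank_factor; last exact/unitmx_mul_tr/row_base_free.
rewrite -[X in _ *m X]trmxK; apply: unitmx_mul_tr.
by rewrite /row_free mxrank_tr; exact: col_base_full.
Qed.

Lemma penrose_contract m n (A : 'M[R]_(m, n)) X z :
  penrose A X -> vnorm2 (A *m X *m z) <= vnorm2 z.
Proof. by case=> AXA _ AX_sym _; apply: vnorm2_proj_le; rewrite // mulmxA AXA. Qed.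

Lemma penrose_range m n (A : 'M[R]_(m, n)) X :
  penrose A X -> X = A^T *m (X^T *m X).
Proof. by case=> _ XAX _ XA_sym; rewrite mulmxA -trmx_mul XA_sym XAX. Qed.

Lemma penrose_tr_fix_range k r (B : 'M[R]_(k, r)) Z p (w : 'M[R]_(r, p)) :
  penrose B Z -> Z^T *m B^T *m (B *m w) = B *m w.
Proof. by case=> BZB _ BZ_sym _; rewrite -trmx_mul BZ_sym mulmxA BZB. Qed.

Lemma opnorm2_penrose_factor_le m k r (F : 'M[R]_(m, r)) (B : 'M[R]_(k, r)) X Z K :
  0 <= K -> (forall y, vnorm2 y <= K * vnorm2 (F *m y)) ->
  penrose (F *m B^T) X -> penrose B Z -> opnorm2 X <= K * opnorm2 Z.
Proof.
move=> K_ge0 FK pX pZ; apply: opnorm2_le_bound => [|z].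
  by rewrite mulr_ge0 ?opnorm2_ge0.
have [w Xz] : exists w, X *m z = B *m w.
  exists (F^T *m (X^T *m X) *m z).
  by rewrite {1}(penrose_range pX) trmx_mul trmxK !mulmxA.
have Xz_fixed := penrose_tr_fix_range w pZ; rewrite -Xz in Xz_fixed.
have BtXz_le : vnorm2 (B^T *m (X *m z)) <= K * vnorm2 z.
  apply: le_trans (FK _) _; rewrite ler_wpM2l // !mulmxA.
  exact: penrose_contract pX.
rewrite -Xz_fixed -mulmxA; apply: le_trans (vnorm2_mul_le_opnorm2 _ _) _.
rewrite [leRHS]mulrAC [leRHS]mulrC.
by apply: ler_pM; rewrite ?opnorm2_ge0 ?vnorm2_ge0 ?opnorm2_tr_le.
Qed.

End Pseudoinverse.

Section CompactSVD.
Variables (R : realType) (m n r : nat) (L : 'M[R]_(m, n)).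
Variables (W : 'M[R]_(m, r)) (s : 'rV[R]_r) (V : 'M[R]_(n, r)).
Hypothesis svdL : compact_svd L W s V.

Lemma svd_mulV : L *m V = W *m diag_mx s.
Proof. by case: svdL => -> _ VtV _; rewrite -mulmxA VtV mulmx1. Qed.

Lemma svd_trW_mul : W^T *m L = diag_mx s *m V^T.
Proof. by case: svdL => -> WtW _ _; rewrite !mulmxA WtW mul1mx. Qed.

Lemma svd_colsJ J : colsJ L J = W *m diag_mx s *m (rowsJ V J)^T.
Proof.
case: svdL => -> _ _ _; rewrite /colsJ -mulmx_colsub; congr (_ *m _).
by apply/matrixP => i j; rewrite !mxE.
Qed.

Lemma sv_mul_opnorm2_pinv_ge1 k : 1 <= s 0 k * opnorm2 (pinv L).
Proof.
case: svdL => _ WtW VtV s_gt0; have [LYL _ _ _] := pinvP L.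
set e : 'cV[R]_r := delta_mx k 0.
have e_unit : vnorm2 e = 1.
  by rewrite vnorm2E /e trmx_delta mul_delta_mx mxE !eqxx sqrtr1.
have diag_e : diag_mx s *m e = s 0 k *: e.
  apply/matrixP => i j; rewrite mul_diag_mx !mxE.
  by case: (i =P k) => [->|]; rewrite ?mulr0.
set w := pinv L *m (W *m e).
have Lw : L *m w = W *m e.
  rewrite /w; suff -> : W *m e = L *m (V *m ((s 0 k)^-1 *: e)) by rewrite !mulmxA LYL.
  rewrite mulmxA svd_mulV -mulmxA -scalemxAr diag_e scalerA mulVf ?scale1r //.
  exact/lt0r_neq0/s_gt0.
have sk_Vtw : s 0 k * (V^T *m w) k 0 = 1.
  have : diag_mx s *m (V^T *m w) = e.
    by rewrite mulmxA -svd_trW_mul -mulmxA Lw mulmxA WtW mul1mx.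
  by move/matrixP/(_ k 0); rewrite mul_diag_mx !mxE !eqxx.
have Vtw_le : (V^T *m w) k 0 <= opnorm2 (pinv L).
  have -> : (V^T *m w) k 0 = ((V *m e)^T *m w) 0 0.
    by rewrite trmx_mul /e trmx_delta -mulmxA -rowE [RHS]mxE.
  apply: le_trans (vnorm2_cauchy_schwarz _ _) _.
  rewrite vnorm2_isometry // e_unit mul1r.
  apply: le_trans (vnorm2_mul_le_opnorm2 _ _) _.
  by rewrite vnorm2_isometry // e_unit mulr1.
by rewrite -sk_Vtw ler_wpM2l // ltW.
Qed.

Lemma vnorm2_le_opnorm2_pinv y :
  vnorm2 y <= opnorm2 (pinv L) * vnorm2 (W *m diag_mx s *m y).
Proof.
case: svdL => _ WtW _ s_gt0.
rewrite -mulmxA vnorm2_isometry // -[opnorm2 _]ger0_norm ?opnorm2_ge0 // -vnorm2Z.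
apply: ler_vnorm2 => k; rewrite mul_diag_mx !mxE !normrM ger0_norm ?opnorm2_ge0 //.
rewrite ger0_norm ?(ltW (s_gt0 k)) // mulrA [_ * s 0 k]mulrC.
by rewrite ler_peMl ?normr_ge0 ?sv_mul_opnorm2_pinv_ge1.
Qed.

Lemma opnorm2_colsJ_le J c : 0 <= c -> (forall i, vnorm2 (row i V)^T <= c) ->
  opnorm2 (colsJ L J) <= c * Num.sqrt #|J|%:R * opnorm2 L.
Proof.
case: svdL => _ _ VtV _ c_ge0 rowV.
rewrite svd_colsJ -svd_mulV -mulmxA mulrC.
apply: le_trans (opnorm2_mulmx_le _ _) _; rewrite ler_wpM2l ?opnorm2_ge0 //.
rewrite opnorm2_isometry_mul //; apply: le_trans (opnorm2_le_frob _) _.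
by rewrite frob_tr; apply: frob_le_rows => // j; rewrite row_rowsub.
Qed.

Lemma opnorm2_pinv_colsJ_le J :
  opnorm2 (pinv (colsJ L J)) <= opnorm2 (pinv L) * opnorm2 (pinv (rowsJ V J)).
Proof.
rewrite svd_colsJ; apply: opnorm2_penrose_factor_le (pinvP _) (pinvP _).
  exact: opnorm2_ge0.
exact: vnorm2_le_opnorm2_pinv.
Qed.

Lemma kappa_colsJ_le J c : 0 <= c -> (forall i, vnorm2 (row i V)^T <= c) ->
  kappa (colsJ L J) <= c * Num.sqrt #|J|%:R * kappa L * opnorm2 (pinv (rowsJ V J)).
Proof.
move=> c_ge0 rowV; rewrite /kappa.
have := ler_pM (opnorm2_ge0 _) (opnorm2_ge0 _)
  (opnorm2_colsJ_le J c_ge0 rowV) (opnorm2_pinv_colsJ_le J).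
by rewrite !mulrA.
Qed.

End CompactSVD.

Theorem lemma4p4 (R : realType) (m n r : nat) (L : 'M[R]_(m, n))
  (W : 'M[R]_(m, r)) (s : 'rV[R]_r) (V : 'M[R]_(n, r)) (mu1 mu2 : R) :
  \rank L = r ->
  compact_svd L W s V ->
  (forall i : 'I_m, vnorm2 (row i W)^T <= Num.sqrt (mu1 * r%:R / m%:R)) ->
  (forall i : 'I_n, vnorm2 (row i V)^T <= Num.sqrt (mu2 * r%:R / n%:R)) ->
  forall J : {set 'I_n},
    let C := colsJ L J in
    opnorm2 C <= Num.sqrt (mu2 * r%:R * #|J|%:R / n%:R) * opnorm2 L /\
    kappa C <= Num.sqrt (mu2 * r%:R) * kappa L * Num.sqrt (#|J|%:R / n%:R)
               * opnorm2 (pinv (rowsJ V J)).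
Proof.
move=> _ svdL _ rowV J C; rewrite {}/C.
set c := Num.sqrt (mu2 * r%:R / n%:R).
(* No sign condition on mu2 is needed: [sqrtrM] only asks for a nonnegative
   first factor. *)
have sqrtJc : Num.sqrt (#|J|%:R * (mu2 * r%:R / n%:R)) = c * Num.sqrt #|J|%:R.
  by rewrite sqrtrM ?ler0n // mulrC.
have c1E : Num.sqrt (mu2 * r%:R * #|J|%:R / n%:R) = c * Num.sqrt #|J|%:R.
  by rewrite -sqrtJc; congr Num.sqrt; ring.
have c2E : Num.sqrt (mu2 * r%:R) * kappa L * Num.sqrt (#|J|%:R / n%:R)
           = c * Num.sqrt #|J|%:R * kappa L.
  rewrite mulrAC -sqrtJc [_ * Num.sqrt _]mulrC -sqrtrM ?divr_ge0 ?ler0n //.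
  by congr (Num.sqrt _ * _); ring.
split; first by rewrite c1E; exact: (opnorm2_colsJ_le svdL J (sqrtr_ge0 _) rowV).
by rewrite c2E; exact: (kappa_colsJ_le svdL J (sqrtr_ge0 _) rowV).
Qed.
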